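(* Let $G$ be a finite group. Then the width of $G$ is equal to the number of conjugacy classes of meet-irreducible subgroups of $G$. Moreover, choosing one representative $I$ from each conjugacy class of meet-irreducible subgroups of $G$, the set of arrows $\{(I,G)\}$ so obtained is a minimal generating set for the complete transfer system of $G$.
   Context: For a finite group $G$, an arrow is a pair $(H,K)$ of subgroups with $H\leqslant K$; it is an identity arrow if $H=K$. A $G$-transfer system is a set $\mathsf{T}$ of arrows containing all identity arrows and closed under composition ($(H,K),(K,L)\in\mathsf{T}\Rightarrow(H,L)\in\mathsf{T}$), conjugation ($(H,K)\in\mathsf{T}\Rightarrow(gHg^{-1},gKg^{-1})\in\mathsf{T}$) and restriction ($(H,K)\in\mathsf{T}$, $L\leqslant K\Rightarrow(H\cap L,L)\in\mathsf{T}$). For a set $S$ of non-identity arrows, $\langle S\rangle$ is the smallest transfer system containing $S$. A minimal generating set of a transfer system $\mathsf{T}$ is a set $S\subseteq\mathsf{T}$ of non-identity arrows with $\langle S\rangle=\mathsf{T}$ and $\langle S\setminus\{s\}\rangle\neq\mathsf{T}$ for all $s\in S$; all minimal generating sets of $\mathsf{T}$ have the same cardinality, denoted $\mathfrak{m}(\mathsf{T})$. The complete transfer system of $G$ consists of all arrows, and the width of $G$ is $\mathfrak{m}$ of the complete transfer system. A subgroup $H\leqslant G$ is meet-irreducible if it is meet-irreducible in the subgroup lattice: $H\neq G$, and whenever $H=A\cap B$ for subgroups $A,B$, one has $H=A$ or $H=B$. *)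

From mathcomp Require Import all_boot all_fingroup.
Set Implicit Arguments. Unset Strict Implicit. Unset Printing Implicit Defensive.
Local Open Scope group_scope.

Section TransferSystems.
Variable gT : finGroupType.

Definition arrow := ({group gT} * {group gT})%type.

Definition is_transfer_system (G : {group gT}) (T : {set arrow}) : Prop :=
  [/\ (forall a : arrow, a \in T -> (a.1 \subset a.2) && (a.2 \subset G)),
      (forall H : {group gT}, H \subset G -> (H, H) \in T),
      (forall H K L : {group gT}, (H, K) \in T -> (K, L) \in T -> (H, L) \in T),
      (forall (H K : {group gT}) (g : gT), g \in G -> (H, K) \in T ->
          ((H :^ g)%G, (K :^ g)%G) \in T) &
      (forall H K L : {group gT}, (H, K) \in T -> L \subset K ->
          ((H :&: L)%G, L) \in T)].

Definition generates (G : {group gT}) (S T : {set arrow}) : Prop :=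
  forall a : arrow, a \in T <->
    (forall T' : {set arrow}, is_transfer_system G T' -> S \subset T' -> a \in T').

Definition is_identity_arrow (a : arrow) : bool := a.1 == a.2.

Definition minimal_generating_set (G : {group gT}) (S T : {set arrow}) : Prop :=
  [/\ S \subset T,
      (forall a, a \in S -> ~~ is_identity_arrow a),
      generates G S T &
      (forall s, s \in S -> ~ generates G (S :\ s) T)].

Definition complete_ts (G : {group gT}) : {set arrow} :=
  [set a : arrow | (a.1 \subset a.2) && (a.2 \subset G)].

Definition meet_irreducible (G H : {group gT}) : bool :=
  [&& H \subset G, H != G &
   [forall A : {group gT}, forall B : {group gT},
     [&& A \subset G, B \subset G & (H :==: A :&: B)] ==> (H == A) || (H == B)]].

Definition meet_irr_subgroups (G : {group gT}) : {set {group gT}} :=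
  [set H : {group gT} | meet_irreducible G H].

Definition conj_class (G H : {group gT}) : {set {group gT}} :=
  [set (H :^ g)%G | g in G].

Definition meet_irr_classes (G : {group gT}) : {set {set {group gT}}} :=
  [set conj_class G H | H in meet_irr_subgroups G].

Definition is_mi_transversal (G : {group gT}) (R : {set {group gT}}) : Prop :=
  [/\ R \subset meet_irr_subgroups G,
      (forall H, H \in meet_irr_subgroups G -> exists2 I, I \in R & H \in conj_class G I) &
      (forall I J, I \in R -> J \in R -> J \in conj_class G I -> I = J)].

End TransferSystems.

From mathcomp Require Import all_boot all_fingroup zify.
Set Implicit Arguments. Unset Strict Implicit. Unset Printing Implicit Defensive.
Local Open Scope group_scope.

(* Call an arrow (H, K) a cover of a meet-irreducible J when H is conjugate to
   J and H < K.  A set S of arrows generates the complete transfer system iff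
   every meet-irreducible subgroup has a cover in S.  Sufficiency: by
   descending induction on H, every (H, G) is generated: a meet-reducible
   H = A :&: B by restricting (A, G) to B and composing with (B, G); a
   meet-irreducible H by conjugating a cover (H', K) to (H, K^g) and composing
   with (K^g, G).  Necessity: the arrows H -> K with H = K :&: X for some X not
   conjugate to J form a transfer system missing (J, G); it is closed under
   composition precisely because J is meet-irreducible.  So a minimal
   generating set contains exactly one cover of each conjugacy class of
   meet-irreducible subgroups. *)

Section CompleteTransferSystem.
Variables (gT : finGroupType) (G : {group gT}).
Implicit Types (H I J K X Y : {group gT}) (S T : {set arrow gT}).

Lemma conj_classE H : conj_class G H = orbit 'JG G H. Proof. by []. Qed.

Lemma conj_class_refl H : H \in conj_class G H.
Proof. by rewrite conj_classE orbit_refl. Qed.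

Lemma conj_class_sym H I : (H \in conj_class G I) = (I \in conj_class G H).
Proof. by rewrite !conj_classE orbit_sym. Qed.

Lemma conj_class_eqP H I :
  reflect (conj_class G H = conj_class G I) (H \in conj_class G I).
Proof. by rewrite !conj_classE; apply: orbit_eqP. Qed.

Lemma conj_classJ H I g :
  g \in G -> ((H :^ g)%G \in conj_class G I) = (H \in conj_class G I).
Proof. by move=> Gg; rewrite conj_classE (orbit_actr ('JG)%act _ _ Gg). Qed.

Lemma conj_classP H I :
  reflect (exists2 g, g \in G & H :=: I :^ g) (H \in conj_class G I).
Proof.
apply: (iffP imsetP) => -[g Gg eH]; exists g => //; first by rewrite eH.
exact: group_inj.
Qed.

Lemma conj_class_top : conj_class G G = [set G].
Proof.
apply/setP=> H; rewrite inE; apply/conj_classP/eqP => [[g Gg eH]|->].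
  by apply: group_inj; rewrite eH conjGid.
by exists 1; rewrite ?conjsg1.
Qed.

Lemma meet_irreducible_neq I : meet_irreducible G I -> I != G.
Proof. by case/and3P. Qed.

Lemma meet_irreducible_sub I : meet_irreducible G I -> I \subset G.
Proof. by case/and3P. Qed.

Lemma meet_reducible_proper H :
  H \subset G -> H != G -> ~~ meet_irreducible G H ->
  exists A B : {group gT},
    [/\ A \subset G, B \subset G, H \proper A, H \proper B & H :=: A :&: B].
Proof.
rewrite /meet_irreducible => -> -> /forallPn[A /forallPn[B]].
rewrite negb_imply => /andP[/and3P[sAG sBG /eqP eH] /norP[nHA nHB]].
exists A, B; split=> //.
  by rewrite properEneq nHA eH subsetIl.
by rewrite properEneq nHB eH subsetIr.
Qed.

Lemma transfer_system_complete : is_transfer_system G (complete_ts G).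
Proof.
split=> [a|H sHG|H K L|H K g Gg|H K L]; rewrite ?inE //= ?subxx //.
- by case/andP=> sHK _ /andP[sKL ->]; rewrite (subset_trans sHK sKL).
- by case/andP=> sHK sKG; rewrite conjSg sHK -(conjGid Gg) conjSg.
- by case/andP=> _ sKG sLK; rewrite subsetIr (subset_trans sLK sKG).
Qed.

Definition covers J (a : arrow gT) : bool :=
  (a.1 \in conj_class G J) && (a.1 \proper a.2).

Definition covers_meet_irr S : Prop :=
  forall J, meet_irreducible G J -> exists2 a, a \in S & covers J a.

Lemma covers_top I J :
  meet_irreducible G I -> J \in conj_class G I -> covers J (I, G).
Proof.
move=> irrI JI; rewrite /covers /= conj_class_sym JI properEneq.
by rewrite meet_irreducible_neq ?meet_irreducible_sub.
Qed.

Lemma covers_conj_class J (a : arrow gT) :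
  covers J a -> conj_class G a.1 = conj_class G J.
Proof. by case/andP=> /conj_class_eqP. Qed.

Lemma transfer_to_top S T :
  is_transfer_system G T -> S \subset T -> covers_meet_irr S ->
  forall H, H \subset G -> (H, G) \in T.
Proof.
move=> [subT idT compT conjT resT] sST covS H.
have [n] := ubnP (#|G| - #|H|); elim: n H => // n IH H ltHn sHG.
have IHp K : H \proper K -> K \subset G -> (K, G) \in T.
  move=> pHK sKG; apply: IH => //.
  by have := proper_card pHK; have := subset_leq_card sKG; lia.
have [->|nHG] := eqVneq H G; first exact: idT.
have [irrH|redH] := boolP (meet_irreducible G H).
  have [[A K] /(subsetP sST) AKT /andP[/= AH pAK]] := covS H irrH.
  have /andP[_ sKG] := subT _ AKT.
  rewrite conj_class_sym in AH; case/conj_classP: AH => g Gg eH.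
  apply: (compT _ (K :^ g)%G).
    by rewrite (group_inj eH); exact: conjT.
  by apply: IHp; rewrite /= ?eH ?properJ // -(conjGid Gg) conjSg.
have [A [B [sAG sBG pHA pHB eH]]] := meet_reducible_proper sHG nHG redH.
rewrite (group_inj (eH : gval H = (A :&: B)%G)).
exact: compT (resT _ _ _ (IHp _ pHA sAG) sBG) (IHp _ pHB sBG).
Qed.

Lemma complete_subset_transfer T :
  is_transfer_system G T -> (forall H, H \subset G -> (H, G) \in T) ->
  complete_ts G \subset T.
Proof.
move=> [_ _ _ _ resT] toG; apply/subsetP => -[H K].
rewrite inE /= => /andP[sHK sKG].
have -> : H = (H :&: K)%G by apply: group_inj; rewrite /= (setIidPl sHK).
exact: resT (toG _ (subset_trans sHK sKG)) sKG.
Qed.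

Section AvoidClass.
Variable I : {group gT}.
Hypothesis irrI : meet_irreducible G I.

Definition avoid_class_ts : {set arrow gT} :=
  [set a : arrow gT | [&& a.1 \subset a.2, a.2 \subset G &
    [exists X : {group gT},
      [&& X \subset G, X \notin conj_class G I & a.1 :==: a.2 :&: X]]]].

Lemma top_notin_conj_class : G \notin conj_class G I.
Proof. by rewrite conj_class_sym conj_class_top inE meet_irreducible_neq. Qed.

Lemma conj_class_setI X Y :
  X \subset G -> Y \subset G -> (X :&: Y)%G \in conj_class G I ->
  (X \in conj_class G I) || (Y \in conj_class G I).
Proof.
move=> sXG sYG; rewrite conj_class_sym => /conj_classP[g Gg eI].
have sJG (Z : {group gT}) : Z \subset G -> (Z :^ g)%G \subset G.
  by move=> sZG; rewrite /= -(conjGid Gg) conjSg.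
move: irrI => /and3P[_ _ /forallP/(_ (X :^ g)%G)/forallP/(_ (Y :^ g)%G)].
rewrite !sJG //= eI conjIg eqxx /= => /orP[]/eqP ->; apply/orP.
  by left; rewrite conj_class_sym conj_classJ ?conj_class_refl.
by right; rewrite conj_class_sym conj_classJ ?conj_class_refl.
Qed.

Lemma avoid_class_transfer : is_transfer_system G avoid_class_ts.
Proof.
split=> [a|H sHG|H K L|H K h Gh|H K L]; rewrite ?inE /=.
- by case/and3P=> -> ->.
- rewrite subxx sHG; apply/existsP; exists G.
  by rewrite subxx top_notin_conj_class (setIidPl sHG) /=.
- case/and3P=> sHK _ /existsP[X /and3P[sXG nX /eqP eH]].
  case/and3P=> sKL -> /existsP[Y /and3P[sYG nY /eqP eK]].
  rewrite (subset_trans sHK sKL); apply/existsP; exists (X :&: Y)%G.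
  rewrite /= (subset_trans (subsetIl _ _)) // eH eK setIAC -setIA eqxx andbT.
  by apply: contra (conj_class_setI sXG sYG) _; rewrite negb_or nX.
- have sJG (Z : {set gT}) : Z \subset G -> Z :^ h \subset G.
    by move=> sZG; rewrite -(conjGid Gh) conjSg.
  case/and3P=> sHK sKG /existsP[X /and3P[sXG nX /eqP eH]].
  rewrite conjSg sHK sJG //; apply/existsP; exists (X :^ h)%G.
  by rewrite /= sJG // conj_classJ // nX eH conjIg eqxx.
- case/and3P=> sHK sKG /existsP[X /and3P[sXG nX /eqP eH]] sLK.
  rewrite subsetIr (subset_trans sLK sKG); apply/existsP; exists X.
  by rewrite sXG nX eH /= setIAC (setIidPr sLK).
Qed.

Lemma top_notin_avoid_class : (I, G) \notin avoid_class_ts.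
Proof.
rewrite inE /=; apply/negP => /and3P[_ _ /existsP[X /and3P[sXG nX /eqP eI]]].
by rewrite -(group_inj (etrans eI (setIidPr sXG))) conj_class_refl in nX.
Qed.

Lemma sub_avoid_class S :
  S \subset complete_ts G -> (forall a, a \in S -> ~~ covers I a) ->
  S \subset avoid_class_ts.
Proof.
move=> sS uncovered; apply/subsetP => -[H K] SHK; rewrite inE /=.
have /[!inE] /= /andP[sHK sKG] := subsetP sS _ SHK; rewrite sHK sKG /=.
have /negP := uncovered _ SHK; rewrite /covers /=.
have [HI | nHI] := boolP (H \in conj_class G I) => /= [npHK|_]; apply/existsP.
  exists G; rewrite subxx top_notin_conj_class //= (setIidPl sKG).
  rewrite eqEsubset sHK /=; apply/negPn/negP => nKH.
  by apply: npHK; rewrite properE sHK.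
by exists H; rewrite (subset_trans sHK sKG) nHI (setIidPr sHK) /=.
Qed.

End AvoidClass.

Lemma generates_completeP S :
  S \subset complete_ts G ->
  generates G S (complete_ts G) <-> covers_meet_irr S.
Proof.
move=> sS; split=> [gen J irrJ | covS a].
  apply/exists_inP; apply: contraT => /exists_inPn uncovered.
  have /(gen (J, G)) JG : (J, G) \in complete_ts G.
    by rewrite inE /= subxx meet_irreducible_sub.
  have /negP[] := top_notin_avoid_class J.
  exact: JG (avoid_class_transfer irrJ) (sub_avoid_class irrJ sS uncovered).
split=> [ca T tsT sST | /(_ _ transfer_system_complete sS)//].
apply: (subsetP (complete_subset_transfer tsT _)) ca.
exact: transfer_to_top tsT sST covS.
Qed.

Section MinimalCover.
Variable S : {set arrow gT}.
Hypothesis covS : covers_meet_irr S.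
Hypothesis minS : forall s, s \in S -> ~ covers_meet_irr (S :\ s).

Lemma minimal_cover_covers s :
  s \in S -> exists2 J, meet_irreducible G J & covers J s.
Proof.
move=> Ss; have [/existsP[J /andP[]]|none] :=
  boolP [exists J : {group gT}, meet_irreducible G J && covers J s].
  by exists J.
case: (minS Ss) => J irrJ; have [t St cJt] := covS irrJ.
exists t => //; rewrite !inE St andbT; apply: contraNneq none => ets.
by apply/existsP; exists J; rewrite irrJ -ets.
Qed.

Lemma minimal_cover_classes :
  [set conj_class G s.1 | s in S] = meet_irr_classes G.
Proof.
apply/setP=> C; apply/imsetP/imsetP => -[x xin ->].
  have [J irrJ /covers_conj_class->] := minimal_cover_covers xin.
  by exists J; rewrite ?inE.
by rewrite inE in xin; have [s Ss /covers_conj_class<-] := covS xin; exists s.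
Qed.

Lemma minimal_cover_class_inj : {in S &, injective (fun s => conj_class G s.1)}.
Proof.
move=> s t Ss St eq_st; apply/eqP/negPn/negP => nst.
apply: (minS Ss) => J irrJ; have [u Su cJu] := covS irrJ.
have [eus|nus] := eqVneq u s; last by exists u; rewrite // !inE nus.
exists t; first by rewrite !inE eq_sym nst.
have [_ _ /andP[_ pt]] := minimal_cover_covers St.
rewrite /covers pt andbT; apply/conj_class_eqP.
by rewrite -eq_st -eus (covers_conj_class cJu).
Qed.

Lemma card_minimal_cover : #|S| = #|meet_irr_classes G|.
Proof.
by rewrite -minimal_cover_classes (card_in_imset minimal_cover_class_inj).
Qed.

End MinimalCover.

End CompleteTransferSystem.

Theorem proposition4p5 (gT : finGroupType) (G : {group gT}) :
  (forall S : {set arrow gT}, minimal_generating_set G S (complete_ts G) ->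
     #|S| = #|meet_irr_classes G|) /\
  (forall R : {set {group gT}}, is_mi_transversal G R ->
     minimal_generating_set G [set (I, G) | I in R] (complete_ts G)).
Proof.
split=> [S [sS _ gen minS] | R [sR covR uniqR]].
  apply: card_minimal_cover; first exact/(generates_completeP sS).
  by move=> s Ss /(generates_completeP (subset_trans (subsetDl _ _) sS))/minS[].
have irrR I : I \in R -> meet_irreducible G I by move/(subsetP sR); rewrite inE.
have sS : [set (I, G) | I in R] \subset complete_ts G.
  apply/subsetP => _ /imsetP[I IR ->].
  by rewrite inE /= subxx meet_irreducible_sub ?irrR.
split=> // [_ /imsetP[I IR ->] | | s /imsetP[I IR ->]].
- exact: meet_irreducible_neq (irrR _ IR).
- apply/(generates_completeP sS) => J irrJ.
  have [I IR JI] : exists2 I, I \in R & J \in conj_class G I.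
    by apply: covR; rewrite inE.
  by exists (I, G); [apply: imset_f | apply: covers_top (irrR _ IR) JI].
move/(generates_completeP (subset_trans (subsetDl _ _) sS))/(_ I (irrR _ IR)).
case=> a /setD1P[nIG /imsetP[J JR aJ]]; rewrite aJ => /andP[/= JI _].
by move: nIG; rewrite aJ (uniqR _ _ IR JR JI) eqxx.
Qed.
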